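(* Let $R_1$ and $R_2$ be finite commutative local principal ideal rings with unity, and let $R=R_1\times R_2$. Suppose $\operatorname{diam}(\Gamma(R_1))=0$ and $\operatorname{diam}(\Gamma(R_2))=2$. Then $\overline{\Gamma(R)}$ is a divisor graph if and only if $R_1$ is an integral domain.
   Context: For a commutative ring $S$ with unity, $Z(S)$ denotes its set of zero divisors. The zero divisor graph $\Gamma(S)$ is the simple graph with vertex set $Z(S)\setminus\{0\}$, distinct $a,b$ adjacent iff $ab=0$; its complement $\overline{\Gamma(S)}$ has the same vertex set with distinct $a,b$ adjacent iff $ab\neq 0$. The diameter of a graph is the maximum distance (number of edges in a shortest path) between pairs of vertices. In the paper's usage, $\operatorname{diam}(\Gamma(S))=0$ means $\Gamma(S)$ has at most one vertex, i.e. $S$ has at most one nonzero zero divisor (this includes the case that $S$ is an integral domain). A ring is local if it has a unique maximal ideal. For a nonempty set $T$ of positive integers, the divisor graph $G(T)$ has vertex set $T$, with distinct $i,j$ adjacent iff $i\mid j$ or $j\mid i$; a graph is a divisor graph if it is isomorphic to some $G(T)$. *)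

From HB Require Import structures.
From mathcomp Require Import all_boot all_order all_algebra.
Set Implicit Arguments. Unset Strict Implicit. Unset Printing Implicit Defensive.
Import GRing.Theory.
Local Open Scope ring_scope.

Section RingDefs.
Variable R : finComPzRingType.

Definition is_ideal (I : {set R}) : bool :=
  [&& (0 \in I),
      [forall x, forall y, (x \in I) ==> (y \in I) ==> (x - y \in I)] &
      [forall r, forall x, (x \in I) ==> (r * x \in I)]].

Definition principal_ideal (a : R) : {set R} := [set r * a | r : R].

Definition is_PIR : Prop :=
  forall I : {set R}, is_ideal I -> exists a : R, I = principal_ideal a.

Definition is_maximal_ideal (M : {set R}) : Prop :=
  is_ideal M /\ M != [set: R] /\
  forall J : {set R}, is_ideal J -> M \subset J -> J = M \/ J = [set: R].

Definition is_local : Prop :=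
  exists M : {set R}, is_maximal_ideal M /\
    forall M' : {set R}, is_maximal_ideal M' -> M' = M.

Definition is_integral_domain : Prop :=
  (1 != 0 :> R) /\ forall a b : R, a * b = 0 -> a = 0 \/ b = 0.

Definition zero_divisors : {set R} := [set a | [exists b, (b != 0) && (a * b == 0)]].

Definition zdg_vertices : {set R} := zero_divisors :\ 0.

Definition zdg_adj : rel R := fun a b => (a != b) && (a * b == 0).
Definition zdg_compl_adj : rel R := fun a b => (a != b) && (a * b != 0).
End RingDefs.

Section GraphDefs.
Variable T : finType.
Variables (V : {set T}) (e : rel T).

Definition dist_le (k : nat) (x y : T) : Prop :=
  exists p : seq T, [/\ path e x p, all (mem V) (x :: p),
                        last x p = y & (size p <= k)%N].

(* For d = 0 this says the graph has at most one vertex (paper's convention). *)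
Definition diam_eq (d : nat) : Prop :=
  (forall x y, x \in V -> y \in V -> dist_le d x y) /\
  ((0 < d)%N -> exists x y, [/\ x \in V, y \in V & ~ dist_le d.-1 x y]).

(* (V, e) is isomorphic to the divisor graph G(S) of a nonempty set S of
   positive integers (S is the image of f) *)
Definition is_divisor_graph : Prop :=
  V != set0 /\
  exists f : T -> nat,
    {in V &, injective f} /\ (forall x, x \in V -> (0 < f x)%N) /\
    (forall x y, x \in V -> y \in V -> x != y ->
       e x y = ((f x %| f y) || (f y %| f x))%N).
End GraphDefs.

HB.instance Definition _ (R1 R2 : finComNzRingType) :=
  GRing.ComNzRing.on (R1 * R2)%type.

From mathcomp Require Import all_boot all_order all_algebra.

Set Implicit Arguments.
Unset Strict Implicit.
Unset Printing Implicit Defensive.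
Import GRing.Theory.

(* If R1 is a domain, divisibility in the local PIR R2 is a total preorder,
   from which (breaking ties by an enumeration) one builds a strict order on
   R1 * R2 whose comparability graph is the complement of the zero-divisor
   graph.  The comparability graph of a finite strict order is a divisor
   graph: send x to the product of distinct primes indexed by the elements
   below or equal to x.  Conversely, if R1 is not a domain, diam 0 gives
   a != 0 in R1 with a^2 = 0, and diam 2 gives s, t in R2 with s != 0,
   s^2 = s t = 0 and t^2 != 0.  Seven vertices built from a, s and t then
   carry a chain of forced orientations that reverses one of its edges, so
   the complement is not even a comparability graph. *)

Fixpoint nth_prime (n : nat) : nat :=
  if n is k.+1 then s2val (prime_above (nth_prime k)) else 2.

Lemma nth_prime_prime n : prime (nth_prime n).
Proof. by case: n => [|n] //=; case: prime_above. Qed.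

Lemma nth_prime_inj : injective nth_prime.
Proof.
apply/incn_inj/leq_mono/(homo_ltn ltn_trans) => n /=.
by case: prime_above.
Qed.

Section StrictOrderDivisorGraph.
Variables (T : finType) (V : {set T}) (e lt : rel T).
Hypotheses (lt_irr : irreflexive lt) (lt_trans : transitive lt).
Hypothesis e_lt : forall x y, x \in V -> y \in V -> x != y -> e x y = lt x y || lt y x.

Let le (x y : T) := lt x y || (x == y).
Let p (y : T) := nth_prime (enum_rank y).
Let down_prod x := (\prod_(y | le y x) p y)%N.

Let le_trans : transitive le.
Proof.
rewrite /le => y x z /orP[xy|/eqP->] // /orP[yz|/eqP<-].
- by rewrite (lt_trans xy yz).
- by rewrite xy.
Qed.

Let le_anti x y : le x y -> le y x -> x = y.
Proof.
move=> /orP[xy|/eqP//] /orP[yx|/eqP//].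
by have := lt_trans xy yx; rewrite lt_irr.
Qed.

Let dvdn_down_prod x y : (down_prod x %| down_prod y)%N = le x y.
Proof.
apply/idP/idP => [dvd_xy | le_xy].
  have : (p x %| down_prod y)%N.
    apply: dvdn_trans dvd_xy; rewrite /down_prod (bigD1 x) /= ?/le ?eqxx ?orbT //.
    exact: dvdn_mulr _ (dvdnn _).
  rewrite Euclid_dvd_prod ?nth_prime_prime // big_has_cond.
  case/hasP => z _ /andP[le_zy].
  by rewrite dvdn_prime2 ?nth_prime_prime // => /eqP/nth_prime_inj/ord_inj/enum_rank_inj->.
rewrite /down_prod [X in (_ %| X)%N](bigID (fun z => le z x)) /=.
rewrite [X in (_ %| X * _)%N](eq_bigl (fun z => le z x)) => [|z].
  exact: dvdn_mulr _ (dvdnn _).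
by case le_zx: (le z x); rewrite ?andbT ?andbF ?(le_trans le_zx le_xy).
Qed.

Lemma divisor_graph_of_strict_order : V != set0 -> is_divisor_graph V e.
Proof.
split=> //; exists down_prod; split; [|split].
- move=> x y _ _ eq_xy.
  by apply: le_anti; rewrite -dvdn_down_prod eq_xy.
- by move=> x _; apply: prodn_cond_gt0 => y _; rewrite prime_gt0 ?nth_prime_prime.
- move=> x y xV yV neq_xy.
  by rewrite e_lt // !dvdn_down_prod /le (negPf neq_xy) eq_sym (negPf neq_xy) !orbF.
Qed.

End StrictOrderDivisorGraph.

Section TiebreakOrder.
Variables (T : finType) (le : rel T).
Hypotheses (le_refl : reflexive le) (le_trans : transitive le) (le_total : total le).

Definition tiebreak_lt (x y : T) : bool :=
  le x y && (~~ le y x || (enum_rank x < enum_rank y)%N).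

Lemma tiebreak_lt_irr : irreflexive tiebreak_lt.
Proof. by move=> x; rewrite /tiebreak_lt le_refl ltnn. Qed.

Lemma tiebreak_lt_trans : transitive tiebreak_lt.
Proof.
move=> y x z /andP[le_xy lt_xy] /andP[le_yz lt_yz].
rewrite /tiebreak_lt (le_trans le_xy le_yz) /=.
have [le_zx|] //= := boolP (le z x).
move: lt_xy lt_yz; rewrite (le_trans le_yz le_zx) (le_trans le_zx le_xy) /=.
exact: ltn_trans.
Qed.

Lemma tiebreak_lt_total x y : x != y -> tiebreak_lt x y || tiebreak_lt y x.
Proof.
move=> neq_xy; rewrite /tiebreak_lt; move: (le_total x y).
case: (ltngtP (enum_rank x) (enum_rank y)) => [_|_|/val_inj/enum_rank_inj eq_xy];
  last by rewrite eq_xy eqxx in neq_xy.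
all: by case: (le x y); case: (le y x).
Qed.

End TiebreakOrder.

Definition comparable_by (T : Type) (le : rel T) : rel T :=
  fun x y => le x y || le y x.

Lemma comparable_by_converse (T : Type) (le : rel T) :
  comparable_by (fun x y => le y x) =2 comparable_by le.
Proof. by move=> x y; apply: orbC. Qed.

Section Forcing.
Variables (T : Type) (le : rel T).
Hypothesis le_trans : transitive le.

Lemma forced_below a b c :
  le a b -> comparable_by le b c -> ~~ comparable_by le a c -> le c b.
Proof. by move=> ab /orP[bc|//] /negP[]; rewrite /comparable_by (le_trans ab bc). Qed.

Lemma forced_above a b c :
  le b a -> comparable_by le b c -> ~~ comparable_by le a c -> le b c.
Proof. by move=> ba /orP[//|cb] /negP[]; rewrite /comparable_by (le_trans cb ba) orbT. Qed.

Lemma gamma_chain_contra p q s t u w x : le q p ->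
  comparable_by le p s -> comparable_by le s t -> comparable_by le s u ->
  comparable_by le u w -> comparable_by le u x -> comparable_by le u p ->
  ~~ comparable_by le q s -> ~~ comparable_by le p t -> ~~ comparable_by le t u ->
  ~~ comparable_by le s w -> ~~ comparable_by le w x -> ~~ comparable_by le x p ->
  ~~ comparable_by le q u -> False.
Proof.
move=> qp ps st su uw ux up nqs npt ntu nsw nwx nxp /negP[].
have sp := forced_below qp ps nqs.
have {}st := forced_above sp st npt.
have {}su := forced_above st su ntu.
have wu := forced_below su uw nsw.
have xu := forced_below wu ux nwx.
have pu := forced_below xu up nxp.
by rewrite /comparable_by (le_trans qp pu).
Qed.

End Forcing.

(* Orienting the edge qp either way forces, edge by edge, the orientation of ps, st, su,
   uw, ux and up, and up then forces qp the other way round. *)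
Lemma gamma_cycle_contra (T : Type) (le : rel T) (p q s t u w x : T) :
  transitive le ->
  comparable_by le q p -> comparable_by le p s -> comparable_by le s t ->
  comparable_by le s u -> comparable_by le u w -> comparable_by le u x ->
  comparable_by le u p ->
  ~~ comparable_by le q s -> ~~ comparable_by le p t -> ~~ comparable_by le t u ->
  ~~ comparable_by le s w -> ~~ comparable_by le w x -> ~~ comparable_by le x p ->
  ~~ comparable_by le q u -> False.
Proof.
move=> le_trans /orP[qp|pq]; first exact: gamma_chain_contra qp.
have ge_trans : transitive (fun a b => le b a) by move=> b a c ba cb; apply: le_trans cb ba.
rewrite -!(comparable_by_converse le); exact: gamma_chain_contra pq.
Qed.

Local Open Scope ring_scope.

Section Ideals.
Variable R : finComPzRingType.
Implicit Types (I M : {set R}) (a b c r x y z : R).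

Definition dvdr a b : bool := b \in principal_ideal a.

Lemma dvdrP a b : reflect (exists r, b = r * a) (dvdr a b).
Proof. by apply: (iffP imsetP) => [[r _ ->]|[r ->]]; exists r. Qed.

Lemma dvdrr a : dvdr a a.
Proof. by apply/dvdrP; exists 1; rewrite mul1r. Qed.

Lemma dvdr_trans : transitive dvdr.
Proof.
move=> b a c /dvdrP[r ->] /dvdrP[s ->].
by apply/dvdrP; exists (s * r); rewrite mulrA.
Qed.

Lemma dvdr_mul_neq0 a b c : dvdr b c -> a * c != 0 -> a * b != 0.
Proof. by case/dvdrP=> r ->; apply: contraNneq => ab0; rewrite mulrCA ab0 mulr0. Qed.

Lemma ideal0 I : is_ideal I -> 0 \in I.
Proof. by case/and3P. Qed.

Lemma idealB I x y : is_ideal I -> x \in I -> y \in I -> x - y \in I.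
Proof. by case/and3P=> _ /forallP/(_ x)/forallP/(_ y) + _ xI yI; rewrite xI yI. Qed.

Lemma idealMl I r x : is_ideal I -> x \in I -> r * x \in I.
Proof. by case/and3P=> _ _ /forallP/(_ r)/forallP/(_ x) + xI; rewrite xI. Qed.

Lemma idealD I x y : is_ideal I -> x \in I -> y \in I -> x + y \in I.
Proof.
move=> I_ideal xI yI; rewrite -[y]opprK -[- y]sub0r.
by rewrite !idealB ?ideal0.
Qed.

Lemma ideal1_setT I : is_ideal I -> 1 \in I -> I = [set: R].
Proof. by move=> I_ideal I1; apply/setP=> r; rewrite inE -[r]mulr1 idealMl. Qed.

Lemma principal_ideal_is_ideal a : is_ideal (principal_ideal a).
Proof.
apply/and3P; split; first by apply/dvdrP; exists 0; rewrite mul0r.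
- apply/forallP=> u; apply/forallP=> v; apply/implyP=> /dvdrP[r ->].
  by apply/implyP=> /dvdrP[s ->]; apply/dvdrP; exists (r - s); rewrite mulrBl.
- apply/forallP=> r; apply/forallP=> u; apply/implyP=> /dvdrP[s ->].
  by apply/dvdrP; exists (r * s); rewrite mulrA.
Qed.

Lemma combination_ideal_is_ideal x y :
  is_ideal [set r * x + s * y | r : R, s : R].
Proof.
apply/and3P; split; first by apply/imset2P; exists 0 0; rewrite ?inE // !mul0r addr0.
- apply/forallP=> u; apply/forallP=> v; apply/implyP=> /imset2P[r s _ _ ->].
  apply/implyP=> /imset2P[r' s' _ _ ->]; apply/imset2P; exists (r - r') (s - s') => //.
  by rewrite !mulrBl addrACA opprD.
- apply/forallP=> c; apply/forallP=> u; apply/implyP=> /imset2P[r s _ _ ->].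
  by apply/imset2P; exists (c * r) (c * s); rewrite // mulrDr !mulrA.
Qed.

Lemma exists_maximal_ideal_sup I : is_ideal I -> I != [set: R] ->
  exists M, is_maximal_ideal M /\ I \subset M.
Proof.
move=> I_ideal I_proper.
pose proper_sup J := [&& is_ideal J, I \subset J & J != [set: R]].
have supI : proper_sup I by rewrite /proper_sup I_ideal subxx I_proper.
case: (arg_maxnP (fun J : {set R} => #|J|) supI) => M /and3P[M_ideal IM M_proper] M_max.
exists M; split=> //; split=> //; split=> // J J_ideal MJ.
case: (eqVneq J [set: R]) => [|J_proper]; [by right | left].
apply/eqP; rewrite eq_sym eqEcard MJ; apply: M_max.
by rewrite /proper_sup J_ideal J_proper (subset_trans IM MJ).
Qed.

End Ideals.

Section LocalRing.
Variable R : finComPzRingType.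
Hypothesis R_local : is_local R.

Lemma local_maximal_ideal_nonunits :
  exists2 M : {set R}, is_maximal_ideal M & forall x, (x \in M) = ~~ dvdr x 1.
Proof.
case: R_local => M [M_max M_unique]; exists M; first exact: M_max.
case: M_max => M_ideal [M_proper _] x.
apply/idP/idP => [xM | x_nonunit].
  apply: contra M_proper => /dvdrP[r r1]; apply/eqP/ideal1_setT => //.
  by rewrite r1 idealMl.
have x_proper : principal_ideal x != [set: R].
  by apply: contra x_nonunit => /eqP xT; rewrite /dvdr xT inE.
have [M' [M'_max xM']] := exists_maximal_ideal_sup (principal_ideal_is_ideal x) x_proper.
by rewrite -(M_unique _ M'_max); apply: (subsetP xM'); apply: dvdrr.
Qed.

Lemma local_nonunit_fixpoint0 (c z : R) : ~~ dvdr c 1 -> z = c * z -> z = 0.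
Proof.
have [M [M_ideal [M_proper _]] M_nonunit] := local_maximal_ideal_nonunits.
move=> c_nonunit z_fix.
have /dvdrP[v v1] : dvdr (1 - c) 1.
  rewrite -[dvdr _ _]negbK -M_nonunit; apply: contraNN M_proper => c1M.
  apply/eqP; apply: ideal1_setT => //.
  by rewrite -(subrK c 1) idealD // M_nonunit.
by rewrite -[z]mul1r v1 -mulrA mulrBl mul1r -z_fix subrr mulr0.
Qed.

Hypothesis R_PIR : is_PIR R.

Lemma dvdr_total (x y : R) : dvdr x y || dvdr y x.
Proof.
have [M [M_ideal _] M_nonunit] := local_maximal_ideal_nonunits.
have [z Iz] := R_PIR (combination_ideal_is_ideal x y).
have /imset2P[r s _ _ z_comb] : z \in [set r * x + s * y | r : R, s : R].
  by rewrite Iz; apply: dvdrr.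
have /dvdrP[a x_az] : dvdr z x.
  by rewrite /dvdr -Iz; apply/imset2P; exists 1 0; rewrite ?mul1r ?mul0r ?addr0.
have /dvdrP[b y_bz] : dvdr z y.
  by rewrite /dvdr -Iz; apply/imset2P; exists 0 1; rewrite ?mul1r ?mul0r ?add0r.
have [/dvdrP[v v1]|a_nonunit] := boolP (dvdr a 1).
  apply/orP; left; apply/dvdrP; exists (b * v).
  by rewrite y_bz -[z]mul1r v1 -mulrA -x_az mulrA.
have [/dvdrP[v v1]|b_nonunit] := boolP (dvdr b 1).
  apply/orP; right; apply/dvdrP; exists (a * v).
  by rewrite x_az -[z]mul1r v1 -mulrA -y_bz mulrA.
have z0 : z = 0.
  apply: (@local_nonunit_fixpoint0 (r * a + s * b)).
    by rewrite -M_nonunit idealD ?idealMl ?M_nonunit.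
  by rewrite mulrDl -!mulrA -x_az -y_bz.
by apply/orP; left; apply/dvdrP; exists 0; rewrite y_bz z0 mulr0 mul0r.
Qed.

End LocalRing.

Section Distance.
Variables (T : finType) (V : {set T}) (e : rel T).

Lemma dist_le0 x y : dist_le V e 0 x y -> x = y.
Proof. by case=> -[|z p] [_ _ <-]. Qed.

Lemma dist_le1 x y : x \in V -> y \in V -> (x == y) || e x y -> dist_le V e 1 x y.
Proof.
move=> xV yV /orP[/eqP<-|xy]; first by exists [::]; split=> //=; rewrite andbT.
by exists [:: y]; split=> //=; rewrite andbT //; apply/andP.
Qed.

End Distance.

Lemma zdg_verticesP (R : finComPzRingType) (x : R) :
  reflect (x != 0 /\ exists2 c, c != 0 & x * c = 0) (x \in zdg_vertices R).
Proof.
rewrite !inE; apply: (iffP andP) => -[x0 x_zd]; split=> //.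
  by case/existsP: x_zd => c /andP[c0 /eqP xc0]; exists c.
by case: x_zd => c c0 xc0; apply/existsP; exists c; rewrite c0 xc0 /=.
Qed.

Lemma diam0_domain_or_square_zero (R : finComNzRingType) :
  diam_eq (zdg_vertices R) (@zdg_adj R) 0 ->
  is_integral_domain R \/ exists2 a : R, a != 0 & a * a = 0.
Proof.
case=> diam0 _.
have [/existsP[a /andP[a0 /eqP aa0]]|no_sq0] :=
  boolP [exists a : R, (a != 0) && (a * a == 0)]; first by right; exists a.
left; split=> [|a b ab0]; first exact: oner_neq0.
have [->|a0] := eqVneq a 0; first by left.
have [->|b0] := eqVneq b 0; first by right.
have aV : a \in zdg_vertices R by apply/zdg_verticesP; split=> //; exists b.
have bV : b \in zdg_vertices R by apply/zdg_verticesP; split=> //; exists a => //; rewrite mulrC.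
have eq_ab := dist_le0 (diam0 a b aV bV).
by case/negP: no_sq0; apply/existsP; exists a; rewrite a0 {2}eq_ab ab0 eqxx.
Qed.

Lemma diam2_square_zero_annihilator (R : finComPzRingType) :
  (forall x y : R, dvdr x y || dvdr y x) ->
  diam_eq (zdg_vertices R) (@zdg_adj R) 2 ->
  exists s t : R, [/\ s != 0, s * s = 0, s * t = 0 & t * t != 0].
Proof.
move=> R_total [_ /(_ isT)[x [y [xV yV far_xy]]]].
have xy0 : x * y != 0.
  apply: contra_notN far_xy => /eqP xy0; apply: dist_le1 => //.
  by rewrite /zdg_adj xy0 eqxx andbT orbN.
have [t tV tt0] : exists2 t, t \in zdg_vertices R & t * t != 0.
  case/orP: (R_total x y) => [dvd_xy|dvd_yx]; [exists x | exists y] => //.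
    exact: dvdr_mul_neq0 dvd_xy xy0.
  by apply: dvdr_mul_neq0 dvd_yx _; rewrite mulrC.
case/zdg_verticesP: tV => _ [s s0 ts0].
exists s, t; split=> //; last by rewrite mulrC.
case/orP: (R_total t s) => [/dvdrP[r s_rt]|dvd_st].
  by rewrite {1}s_rt -mulrA ts0 mulr0.
by case/negP: (dvdr_mul_neq0 dvd_st tt0); rewrite ts0.
Qed.

Section ProductRing.
Variables R1 R2 : finComNzRingType.
Local Notation R := (R1 * R2)%type.

Lemma mul_pair (a c : R1) (b d : R2) : (a, b) * (c, d) = (a * c, b * d) :> R.
Proof. by []. Qed.

Lemma pair_neq0 (a : R1) (b : R2) : ((a, b) != 0 :> R) = (a != 0) || (b != 0).
Proof. by rewrite -negb_and. Qed.

Lemma mul_neq0_pair (u v : R) : (u * v != 0) = (u.1 * v.1 != 0) || (u.2 * v.2 != 0).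
Proof. by case: u v => [a b] [c d]; rewrite mul_pair pair_neq0. Qed.

Lemma mem_zdg_vertices_pair (a c : R1) (b d : R2) :
  (a != 0) || (b != 0) -> (c != 0) || (d != 0) -> a * c = 0 -> b * d = 0 ->
  (a, b) \in zdg_vertices R.
Proof.
move=> ab0 cd0 ac0 bd0; apply/zdg_verticesP; rewrite pair_neq0; split=> //.
by exists (c, d); rewrite ?pair_neq0 // mul_pair ac0 bd0.
Qed.

Lemma compl_zdg_not_divisor_graph (a : R1) (s t : R2) :
  a != 0 -> a * a = 0 -> s != 0 -> s * s = 0 -> s * t = 0 -> t * t != 0 ->
  ~ is_divisor_graph (zdg_vertices R) (@zdg_compl_adj R).
Proof.
move=> a0 aa0 s0 ss0 st0 tt0 [_ [f [_ [_ f_adj]]]].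
set V := zdg_vertices R.
have t0 : t != 0 by apply: contraNneq tt0 => ->; rewrite mul0r.
have ts0 : t * s = 0 by rewrite mulrC.
have edge u v : u \in V -> v \in V -> (u.1 * v.1 != 0) || (u.2 * v.2 != 0) ->
    comparable_by dvdn (f u) (f v).
  move=> uV vV uv0; have [<-|neq_uv] := eqVneq u v; first by rewrite /comparable_by dvdnn.
  by rewrite /comparable_by -f_adj // /zdg_compl_adj neq_uv mul_neq0_pair.
have nonedge u v : u \in V -> v \in V -> (u.1 != v.1) || (u.2 != v.2) ->
    u.1 * v.1 = 0 -> u.2 * v.2 = 0 -> ~~ comparable_by dvdn (f u) (f v).
  move=> uV vV neq_uv uv1 uv2.
  have {}neq_uv : u != v by apply: contraTneq neq_uv => ->; rewrite !eqxx.
  by rewrite /comparable_by -f_adj // /zdg_compl_adj neq_uv mul_neq0_pair uv1 uv2 !eqxx.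
pose P : R := (0, 1); pose Q : R := (0, s); pose S : R := (1, s); pose T : R := (a, 0).
pose U : R := (a, t); pose W : R := (0, t); pose X : R := (1, 0).
have facts := (eqxx, oner_eq0, mul0r, mulr0, mul1r, mulr1, aa0, ss0, st0, ts0, a0, s0, t0, tt0).
have PV : P \in V by apply: (@mem_zdg_vertices_pair _ 1 _ 0); rewrite ?facts.
have QV : Q \in V by apply: (@mem_zdg_vertices_pair _ 1 _ 0); rewrite ?facts.
have SV : S \in V by apply: (@mem_zdg_vertices_pair _ 0 _ s); rewrite ?facts.
have TV : T \in V by apply: (@mem_zdg_vertices_pair _ 0 _ 1); rewrite ?facts.
have UV : U \in V by apply: (@mem_zdg_vertices_pair _ a _ s); rewrite ?facts.
have WV : W \in V by apply: (@mem_zdg_vertices_pair _ 1 _ 0); rewrite ?facts.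
have XV : X \in V by apply: (@mem_zdg_vertices_pair _ 0 _ 1); rewrite ?facts.
apply: (gamma_cycle_contra (p := f P) (q := f Q) (s := f S) (t := f T) (u := f U)
  (w := f W) (x := f X) dvdn_trans).
1-7: by apply: edge => //=; rewrite ?facts.
all: by apply: nonedge => //=; rewrite ?(eq_sym 0) ?facts.
Qed.

End ProductRing.

Lemma integral_domain_mulf_neq0 (R : finComPzRingType) (a b : R) :
  is_integral_domain R -> (a * b != 0) = (a != 0) && (b != 0).
Proof.
case=> _ R_domain; apply/idP/andP => [ab0|[a0 b0]].
  by split; apply: contraNneq ab0 => ->; rewrite ?mul0r ?mulr0.
by apply/eqP => /R_domain[]; apply/eqP.
Qed.

Section ComplementOrder.
Variables R1 R2 : finComNzRingType.
Hypothesis R1_domain : is_integral_domain R1.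
Hypothesis R2_total : forall x y : R2, dvdr x y || dvdr y x.
Local Notation R := (R1 * R2)%type.

Definition snd_dvdr_lt : rel R := tiebreak_lt (fun u v : R => dvdr u.2 v.2).

Let snd_dvdr_refl : reflexive (fun u v : R => dvdr u.2 v.2).
Proof. by move=> u; apply: dvdrr. Qed.

Let snd_dvdr_trans : transitive (fun u v : R => dvdr u.2 v.2).
Proof. by move=> v u w; apply: dvdr_trans. Qed.

Let snd_dvdr_lt_trans : transitive snd_dvdr_lt.
Proof. exact/tiebreak_lt_trans/snd_dvdr_trans. Qed.

(* The vertices (x1, x2) with x1 != 0 come first, linearly ordered by
   divisibility of x2; above them come the vertices (0, x2), ordered by
   reverse divisibility among neighbours. Transitivity rests on
   [dvdr_mul_neq0]: passing to a divisor keeps a product nonzero. *)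
Definition compl_zdg_lt (x y : R) : bool :=
  if x.1 == 0 then (y.1 == 0) && snd_dvdr_lt y x && (x.2 * y.2 != 0)
  else if y.1 == 0 then x.2 * y.2 != 0 else snd_dvdr_lt x y.

Lemma compl_zdg_lt_irr : irreflexive compl_zdg_lt.
Proof.
move=> x; rewrite /compl_zdg_lt /snd_dvdr_lt tiebreak_lt_irr ?andbF //.
by case: (x.1 == 0).
Qed.

Lemma compl_zdg_lt_trans : transitive compl_zdg_lt.
Proof.
move=> y x z; rewrite /compl_zdg_lt.
case: (eqVneq x.1 0) => x1; case: (eqVneq y.1 0) => y1; case: (eqVneq z.1 0) => z1 //=;
  rewrite ?andbF //.
- move=> /andP[lt_yx xy0] /andP[lt_zy yz0].
  rewrite (snd_dvdr_lt_trans lt_zy lt_yx) /=.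
  by case/andP: lt_zy => dvd_zy _; apply: dvdr_mul_neq0 dvd_zy xy0.
- move=> xy0 /andP[/andP[dvd_zy _] _]; exact: dvdr_mul_neq0 dvd_zy xy0.
- move=> /andP[dvd_xy _] zy0; rewrite mulrC; rewrite mulrC in zy0.
  exact: dvdr_mul_neq0 dvd_xy zy0.
- exact: snd_dvdr_lt_trans.
Qed.

Lemma compl_adj_compl_zdg_lt (x y : R) :
  x != y -> zdg_compl_adj x y = compl_zdg_lt x y || compl_zdg_lt y x.
Proof.
move=> neq_xy; rewrite /zdg_compl_adj neq_xy mul_neq0_pair.
rewrite integral_domain_mulf_neq0 // /compl_zdg_lt [y.2 * _]mulrC.
have lt_total := tiebreak_lt_total (fun u v => R2_total u.2 v.2) neq_xy.
case: (eqVneq x.1 0) => x1; case: (eqVneq y.1 0) => y1 //=; rewrite ?andbF ?orbF //=.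
by rewrite -andb_orl orbC lt_total.
Qed.

Lemma compl_zdg_divisor_graph : is_divisor_graph (zdg_vertices R) (@zdg_compl_adj R).
Proof.
apply: (divisor_graph_of_strict_order compl_zdg_lt_irr compl_zdg_lt_trans).
  by move=> x y _ _; apply: compl_adj_compl_zdg_lt.
apply/set0Pn; exists (0, 1); apply: (mem_zdg_vertices_pair (c := 1) (d := 0)).
all: by rewrite ?eqxx ?oner_eq0 ?mul0r ?mulr0.
Qed.

End ComplementOrder.

Theorem theorem2p5 (R1 R2 : finComNzRingType) :
  is_local R1 -> is_PIR R1 -> is_local R2 -> is_PIR R2 ->
  diam_eq (zdg_vertices R1) (@zdg_adj R1) 0 ->
  diam_eq (zdg_vertices R2) (@zdg_adj R2) 2 ->
  (is_divisor_graph (zdg_vertices (R1 * R2)%type) (@zdg_compl_adj (R1 * R2)%type)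
   <-> is_integral_domain R1).
Proof.
move=> _ _ R2_local R2_PIR diam1 diam2.
have R2_total := dvdr_total R2_local R2_PIR.
split=> [R_dg|R1_domain]; last exact: compl_zdg_divisor_graph.
have [//|[a a0 aa0]] := diam0_domain_or_square_zero diam1.
have [s [t [s0 ss0 st0 tt0]]] := diam2_square_zero_annihilator R2_total diam2.
by case: (compl_zdg_not_divisor_graph a0 aa0 s0 ss0 st0 tt0).
Qed.
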